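(* Let $0<\varpi<2$ and $0\le\beta_e\le1$. Let $X$ be binary with distribution $(p,1-p)$ and let $Y$ be the ternary output of the binary erasure channel $$p(y\mid x)=\begin{pmatrix}1-\beta_e&0&\beta_e\\ 0&1-\beta_e&\beta_e\end{pmatrix}.$$ Then the message importance loss capacity is $$C(\varpi,\beta_e)=\max_{p\in[0,1]}\big\{L(\varpi,X)-L(\varpi,X\mid Y)\big\}=(1-\beta_e)\big(e^{\varpi/2}-1\big),$$ attained at $p=1/2$.
   Context: For a discrete random variable $X$ with distribution $\{p(x_1),\dots,p(x_n)\}$ the message importance measure (MIM) is $L(\varpi,X)=\sum_i p(x_i)e^{\varpi(1-p(x_i))}$. For a pair $(X,Y)$ with joint law $p(x_i)p(y_j\mid x_i)$, $p(y_j)=\sum_i p(x_i)p(y_j\mid x_i)$ and $p(x_i\mid y_j)=p(x_i)p(y_j\mid x_i)/p(y_j)$, the conditional message importance measure (CMIM) is $L(\varpi,X\mid Y)=\sum_{j:\,p(y_j)>0} p(y_j)\sum_i p(x_i\mid y_j)e^{\varpi(1-p(x_i\mid y_j))}$. For a fixed transition matrix $p(y\mid x)$, the message importance loss capacity (MILC) is $C=\max_{p(x)}\{L(\varpi,X)-L(\varpi,X\mid Y)\}$. *)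

From Stdlib Require Import Reals Lra.
Open Scope R_scope.

Fixpoint fsum (n : nat) (f : nat -> R) : R :=
  match n with
  | O => 0
  | S k => fsum k f + f k
  end.

Definition MIM (w : R) (n : nat) (px : nat -> R) : R :=
  fsum n (fun i => px i * exp (w * (1 - px i))).

(* output law p(y_j) = sum_i p(x_i) p(y_j | x_i); W i j = p(y_j | x_i) *)
Definition out_law (n : nat) (px : nat -> R) (W : nat -> nat -> R) (j : nat) : R :=
  fsum n (fun i => px i * W i j).

Definition posterior (n : nat) (px : nat -> R) (W : nat -> nat -> R) (i j : nat) : R :=
  px i * W i j / out_law n px W j.

Definition CMIM (w : R) (n m : nat) (px : nat -> R) (W : nat -> nat -> R) : R :=
  fsum m (fun j =>
    if Rlt_dec 0 (out_law n px W j) then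
      out_law n px W j *
      fsum n (fun i => posterior n px W i j * exp (w * (1 - posterior n px W i j)))
    else 0).

Definition binary_law (p : R) (i : nat) : R :=
  match i with
  | O => p
  | _ => 1 - p
  end.

(* Binary erasure channel: inputs {0,1}, outputs {0,1,2 (= erasure)} *)
Definition BEC (be : R) (i j : nat) : R :=
  match i, j with
  | O, O => 1 - be
  | O, 1%nat => 0
  | 1%nat, O => 0
  | 1%nat, 1%nat => 1 - be
  | _, 2%nat => be
  | _, _ => 0
  end.

Definition BEC_loss (w be p : R) : R :=
  MIM w 2 (binary_law p) - CMIM w 2 3 (binary_law p) (BEC be).

(* Over the erasure channel an unerased output reveals the input, so it
   contributes the MIM of a point mass, namely its probability, while an erased
   output leaves the prior unchanged; hence
   L(w,X) - L(w,X|Y) = (1 - be) (L(w,X) - 1).  Writing p = 1/2 + t, the binary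
   MIM is exp(w/2) ((1/2 + t) exp(-wt) + (1/2 - t) exp(wt)), i.e.
   exp(w/2) (cosh(wt) - 2t sinh(wt)), and cosh x - 1 <= x sinh x shows that the
   bracket is at most 1 as soon as w <= 2, with equality at t = 0. *)

From Stdlib Require Import Reals Lra.
Open Scope R_scope.

(* This is cosh x - 1 <= x sinh x, multiplied by 2 exp x. *)
Lemma exp_sub1_sqr_le (x : R) : (exp x - 1) ^ 2 <= x * (exp x ^ 2 - 1).
Proof.
  set (a := exp x).
  assert (Ha : 0 < a) by apply exp_pos.
  assert (Hlow : 1 + x <= a) by apply exp_ineq1_le.
  assert (Hinv : a * exp (- x) = 1).
  { unfold a; rewrite <- exp_plus, Rplus_opp_r; apply exp_0. }
  assert (Hlow_neg : 1 - x <= exp (- x)) by apply exp_ineq1_le.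
  assert (Hup : a - 1 <= x * a) by nra.
  assert (Hfactor : x * (a ^ 2 - 1) - (a - 1) ^ 2 = (a - 1) * (x * (a + 1) - (a - 1)))
    by ring.
  destruct (Rle_dec 0 x) as [Hx | Hx]; nra.
Qed.

Lemma mul_exp_sub1_ge0 (w t : R) : 0 <= w -> 0 <= t * (exp (w * t) - 1).
Proof.
  intro Hw.
  assert (Hup : 1 + w * t <= exp (w * t)) by apply exp_ineq1_le.
  assert (Hdown : 1 + - (w * t) <= exp (- (w * t))) by apply exp_ineq1_le.
  assert (Hinv : exp (w * t) * exp (- (w * t)) = 1).
  { rewrite <- exp_plus, Rplus_opp_r; apply exp_0. }
  pose proof (exp_pos (w * t)).
  destruct (Rle_dec 0 t) as [Ht | Ht].
  - assert (1 <= exp (w * t)) by nra.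
    nra.
  - assert (1 <= exp (- (w * t))) by nra.
    assert (exp (w * t) <= 1) by nra.
    nra.
Qed.

Lemma exp_weighted_sum_le (w t : R) : 0 <= w <= 2 ->
  (1 / 2 + t) * exp (- (w * t)) + (1 / 2 - t) * exp (w * t) <= 1.
Proof.
  intro Hw.
  set (a := exp (w * t)).
  assert (Ha : 0 < a) by apply exp_pos.
  assert (Hinv : exp (- (w * t)) = / a).
  { unfold a; apply exp_Ropp. }
  rewrite Hinv.
  assert (Hkey : (a - 1) ^ 2 <= w * t * (a ^ 2 - 1)) by apply exp_sub1_sqr_le.
  assert (Hsign : 0 <= t * (a - 1)) by (apply mul_exp_sub1_ge0; lra).
  assert (Hsign2 : 0 <= t * (a ^ 2 - 1)) by nra.
  assert (Hbound : (a - 1) ^ 2 <= 2 * t * (a ^ 2 - 1)) by nra.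
  apply (Rmult_le_reg_l a); [exact Ha |].
  replace (a * ((1 / 2 + t) * / a + (1 / 2 - t) * a))
    with (1 / 2 + t + (1 / 2 - t) * a ^ 2) by (field; lra).
  nra.
Qed.

Lemma MIM_binary (w p : R) :
  MIM w 2 (binary_law p) = p * exp (w * (1 - p)) + (1 - p) * exp (w * p).
Proof. unfold MIM; simpl; replace (1 - (1 - p)) with p by ring; ring. Qed.

Lemma MIM_binary_le (w p : R) : 0 <= w <= 2 -> MIM w 2 (binary_law p) <= exp (w / 2).
Proof.
  intro Hw.
  set (t := p - 1 / 2).
  assert (Hbracket := exp_weighted_sum_le w t Hw).
  assert (Hexp1 : exp (w * (1 - p)) = exp (w / 2) * exp (- (w * t))).
  { rewrite <- exp_plus; f_equal; unfold t; field. }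
  assert (Hexp2 : exp (w * p) = exp (w / 2) * exp (w * t)).
  { rewrite <- exp_plus; f_equal; unfold t; field. }
  rewrite MIM_binary, Hexp1, Hexp2.
  replace p with (1 / 2 + t) by (unfold t; ring).
  pose proof (exp_pos (w / 2)).
  nra.
Qed.

Lemma MIM_binary_half (w : R) : MIM w 2 (binary_law (1 / 2)) = exp (w / 2).
Proof.
  rewrite MIM_binary.
  replace (w * (1 - 1 / 2)) with (w / 2) by field.
  replace (w * (1 / 2)) with (w / 2) by field.
  field.
Qed.

Lemma Rlt_dec_guard_mul (d v c : R) :
  0 <= d -> (0 < d -> v = c) -> (if Rlt_dec 0 d then d * v else 0) = d * c.
Proof.
  intros Hd Hv.
  destruct (Rlt_dec 0 d) as [Hpos | Hnpos].
  - now rewrite Hv.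
  - replace d with 0 by lra; ring.
Qed.

Lemma CMIM_BEC (w be p : R) : 0 <= be <= 1 -> 0 <= p <= 1 ->
  CMIM w 2 3 (binary_law p) (BEC be) = 1 - be + be * MIM w 2 (binary_law p).
Proof.
  intros Hbe Hp.
  set (px := binary_law p).
  assert (Hy0 : out_law 2 px (BEC be) 0 = p * (1 - be)) by (unfold out_law; simpl; ring).
  assert (Hy1 : out_law 2 px (BEC be) 1 = (1 - p) * (1 - be))
    by (unfold out_law; simpl; ring).
  assert (Hy2 : out_law 2 px (BEC be) 2 = be) by (unfold out_law; simpl; ring).
  unfold CMIM; simpl.
  rewrite (Rlt_dec_guard_mul _ _ 1), (Rlt_dec_guard_mul _ _ 1),
    (Rlt_dec_guard_mul _ _ (MIM w 2 px)).
  (* The side conditions come last-output-first: erasure, then outputs 1 and 0. *)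
  - rewrite Hy0, Hy1, Hy2; ring.
  - rewrite Hy2; lra.
  - intro Hpos; unfold MIM, posterior; rewrite Hy2 in *; simpl.
    replace (p * be / be) with p by (field; lra).
    replace ((1 - p) * be / be) with (1 - p) by (field; lra).
    reflexivity.
  - rewrite Hy1; nra.
  - intro Hpos; unfold posterior; rewrite Hy1 in *; simpl.
    replace ((1 - p) * (1 - be) / ((1 - p) * (1 - be))) with 1 by (field; nra).
    rewrite Rmult_0_r, Rdiv_0_l, Rminus_diag, Rmult_0_r, exp_0; ring.
  - rewrite Hy0; nra.
  - intro Hpos; unfold posterior; rewrite Hy0 in *; simpl.
    replace (p * (1 - be) / (p * (1 - be))) with 1 by (field; nra).
    rewrite Rmult_0_r, Rdiv_0_l, Rminus_diag, Rmult_0_r, exp_0; ring.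
Qed.

Lemma BEC_loss_MIM (w be p : R) : 0 <= be <= 1 -> 0 <= p <= 1 ->
  BEC_loss w be p = (1 - be) * (MIM w 2 (binary_law p) - 1).
Proof. intros Hbe Hp; unfold BEC_loss; rewrite CMIM_BEC by assumption; ring. Qed.

Theorem proposition2 (w be : R) (hw : 0 < w < 2) (hbe : 0 <= be <= 1) :
  (forall p : R, 0 <= p <= 1 -> BEC_loss w be p <= (1 - be) * (exp (w / 2) - 1)) /\
  BEC_loss w be (1 / 2) = (1 - be) * (exp (w / 2) - 1).
Proof.
  split.
  - intros p Hp.
    rewrite BEC_loss_MIM by assumption.
    assert (Hmim : MIM w 2 (binary_law p) <= exp (w / 2)) by (apply MIM_binary_le; lra).
    apply Rmult_le_compat_l; lra.
  - rewrite BEC_loss_MIM, MIM_binary_half by lra.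
    reflexivity.
Qed.
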